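(* Let $R$ be an integral domain of characteristic zero, $n,d\ge1$, $F\in R[x]_d$, and $G=x_0^d+\cdots+x_n^d$. Let $s\ge1$, $h\ge(d-1)(n+1)+1$, $v\in B_{ds}$ and $w\in B_h$. For $k\ge1$ and $H\in R[x]_{kds}$ let $[H]_k$ denote the vector $(H_{kv+w-t})_{t\in B_h}$. Then there is a matrix $Q$, with rows and columns indexed by $B_h$ and entries that are polynomials of degree at most $1$ in $R[k,\ell]$, such that for all integers $k_0\ge1$ and $0\le\ell_0<k_0s$, $$d(k_0s-\ell_0)\,[G^{k_0s-\ell_0-1}F^{\ell_0+1}]_{k_0}=Q(k_0,\ell_0)\,[G^{k_0s-\ell_0}F^{\ell_0}]_{k_0},$$ and consequently, for all $k_0\ge1$, in the fraction field of $R$, $$[F^{k_0s}]_{k_0}=\frac{1}{d^{k_0s}(k_0s)!}\,Q(k_0,k_0s-1)\cdots Q(k_0,1)Q(k_0,0)\,[G^{k_0s}]_{k_0}.$$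
   Context: $R[x]=R[x_0,\dots,x_n]$; $R[x]_k$ is the submodule of homogeneous polynomials of degree $k$; $B_k=\{u\in\mathbf N^{n+1}:u_0+\cdots+u_n=k\}$; for $H\in R[x]$ and $u\in\mathbf Z^{n+1}$, $H_u$ is the coefficient of $x^u=x_0^{u_0}\cdots x_n^{u_n}$ in $H$, with $H_u=0$ if some $u_i<0$. *)

(* Multivariate polynomials in x_0..x_n are not in the library;
   we represent an element of R[x_0..x_n] by its coefficient function on
   exponent vectors (monomials) u : {ffun 'I_n.+1 -> nat}. *)
From HB Require Import structures.
From mathcomp Require Import all_boot all_order all_algebra fraction.
Set Implicit Arguments. Unset Strict Implicit. Unset Printing Implicit Defensive.
Import Order.TTheory GRing.Theory Num.Theory.
Local Open Scope ring_scope.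

Definition mon (n : nat) := {ffun 'I_n.+1 -> nat}.
Definition mdeg n (u : mon n) : nat := (\sum_i u i)%N.
Definition mpoly (R : nzRingType) (n : nat) := mon n -> R.

Definition homog (R : nzRingType) n (H : mpoly R n) (d : nat) : Prop :=
  forall u : mon n, mdeg u <> d -> H u = 0.

Definition mpmul (R : nzRingType) n (P Q : mpoly R n) : mpoly R n :=
  fun u => \sum_(f : {ffun 'I_n.+1 -> 'I_(mdeg u).+1} | [forall i, (f i <= u i)%N])
             P [ffun i => nat_of_ord (f i)] * Q [ffun i => (u i - f i)%N].

Definition mpone (R : nzRingType) n : mpoly R n :=
  fun u => if mdeg u == 0%N then 1 else 0.

Definition mppow (R : nzRingType) n (P : mpoly R n) (k : nat) : mpoly R n :=
  iter k (@mpmul R n P) (@mpone R n).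

Definition monX n (i : 'I_n.+1) (e : nat) : mon n :=
  [ffun j => if j == i then e else 0%N].

Definition Gpoly (R : nzRingType) n (d : nat) : mpoly R n :=
  fun u => \sum_(i < n.+1) ((u == monX i d)%:R : R).

Definition Bset (n h : nat) :=
  {f : {ffun 'I_n.+1 -> 'I_h.+1} | (\sum_i nat_of_ord (f i))%N == h}.
Definition monB n h (t : Bset n h) : mon n := [ffun i => nat_of_ord (val t i)].

(* coefficient H_u for u in Z^{n+1}, given as k v + w - t (0 if some entry < 0) *)
Definition coefkvwt (R : nzRingType) n (H : mpoly R n) (k : nat) (v w t : mon n) : R :=
  if [forall i, (t i <= k * v i + w i)%N]
  then H [ffun i => (k * v i + w i - t i)%N] else 0.

Definition bvec (R : nzRingType) n h (H : mpoly R n) (k : nat) (v w : mon n)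
  : Bset n h -> R := fun t => coefkvwt H k v w (monB t).

Definition mxv (K : nzRingType) n h (M : Bset n h -> Bset n h -> K) (x : Bset n h -> K)
  : Bset n h -> K := fun t => \sum_(s : Bset n h) M t s * x s.

(* Q(k0,l) with Q = A + k B + l C (entries of degree <= 1 in R[k,l]) *)
Definition Qeval (K : nzRingType) n h (A B C : Bset n h -> Bset n h -> K) (k l : nat)
  : Bset n h -> Bset n h -> K := fun t s => A t s + k%:R * B t s + l%:R * C t s.

Fixpoint chain (K : nzRingType) n h (Q : nat -> Bset n h -> Bset n h -> K)
  (x0 : Bset n h -> K) (j : nat) : Bset n h -> K :=
  match j with
  | 0 => x0
  | j'.+1 => mxv (Q j') (chain Q x0 j')
  end.

Definition toF (R : idomainType) (x : R) : {fraction R} := @FracField.tofrac R x.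

From Pilot Require Import Defs.
From HB Require Import structures.
From mathcomp Require Import all_boot all_order all_algebra fraction.
From mathcomp Require Import ring zify.
From mathcomp.multinomials Require mpoly.
Import Order.TTheory GRing.Theory Num.Theory.
Local Open Scope ring_scope.
Set Implicit Arguments. Unset Strict Implicit. Unset Printing Implicit Defensive.

(* Section Transfer relates products and powers of such functions to the
   multivariate polynomials {mpoly R[n.+1]} of the multinomials library; there
   the Euler operator E_j = x_j d/dx_j is a derivation that multiplies the
   coefficient of x^m by m_j (section Euler).  As E_j G = d x_j^d, Leibniz's
   rule gives the identity (euler_identity)
     d(m+1) G^m F^(l+1) x_j^d = E_j(G^(m+1) F^(l+1)) - (l+1) G^(m+1) F^l E_j F.
   Every t in B_h has a pivot j with t_j >= d, because h > (d-1)(n+1)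
   (section Pivot).  Reading the identity at the exponent k v + w + d e_j - t
   expresses d(m+1) [G^m F^(l+1)]_k(t) through the entries
   [G^(m+1) F^l]_k(t - d e_j + a), |a| = d, with weights affine in k and l;
   these weights form the matrix Q = QA + k QB + l QC (section Recurrence).
   Telescoping the recurrence from G^N to F^N and dividing by d^N N!, which is
   nonzero in characteristic zero, gives the closed form (closed_form). *)

Module EulerRecurrence.
Import mathcomp.multinomials.mpoly.

Section Transfer.
Variables (R : comNzRingType) (n : nat).

Definition mnm_of (u : mon n) : 'X_{1..n.+1} := [multinom u i | i < n.+1].
Definition mon_of (m : 'X_{1..n.+1}) : mon n := [ffun i => m i].

Lemma mnm_ofE u i : mnm_of u i = u i.
Proof. by rewrite mnmE. Qed.

Lemma mon_ofK u : mon_of (mnm_of u) = u.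
Proof. by apply/ffunP => i; rewrite ffunE mnm_ofE. Qed.

Lemma mdeg_mnm_of u : mdeg (mnm_of u) = Defs.mdeg u.
Proof. by rewrite mdegE; apply: eq_bigr => i _; rewrite mnm_ofE. Qed.

Lemma bmnm_lt (b : nat) (k : 'X_{1..n.+1 < b}) i : (k i < b)%N.
Proof. by rewrite (leq_ltn_trans _ (bmdeg k)) // mdegE (bigD1 i) //= leq_addr. Qed.

Lemma mcoeff_sum (I : Type) (r : seq I) (P : pred I) (f : I -> {mpoly R[n.+1]}) m :
  (\sum_(i <- r | P i) f i)@_m = \sum_(i <- r | P i) (f i)@_m.
Proof. exact: raddf_sum. Qed.

Definition represents (P : Defs.mpoly R n) (p : {mpoly R[n.+1]}) :=
  forall u, P u = p@_(mnm_of u).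

Lemma represents_mul P Q p q :
  represents P p -> represents Q q -> represents (mpmul P Q) (p * q).
Proof.
move=> hP hQ u; rewrite (mcoeff_poly_mul_lin _ _ (ltnSn _)) /mpmul mdeg_mnm_of.
set b := (Defs.mdeg u).+1.
pose ffun_of (k : 'X_{1..n.+1 < b}) := [ffun i => (inord (k i) : 'I_b)].
pose mnm_of_ffun (f : {ffun 'I_n.+1 -> 'I_b}) :=
  insubd (bm0 : 'X_{1..n.+1 < b}) [multinom (f i : nat) | i < n.+1].
have ffun_ofK k i : ffun_of k i = k i :> nat by rewrite ffunE inordK ?bmnm_lt.
rewrite (reindex ffun_of) /=; last first.
  exists mnm_of_ffun => [k _|f /forallP f_le].
    apply: val_inj; rewrite /= insubdK; first by apply/mnmP => i; rewrite mnmE.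
    by rewrite -topredE /= (_ : [multinom _ | i < n.+1] = val k) ?bmdeg //;
      apply/mnmP => i; rewrite mnmE.
  apply/ffunP => i; rewrite ffunE insubdK ?mnmE ?inord_val // -topredE /=.
  by rewrite mdegE ltnS; apply: leq_sum => j _; rewrite mnmE.
apply: eq_big => [k|k _].
  by apply/forallP/mnm_lepP => H i; move: (H i); rewrite ffun_ofK mnm_ofE.
rewrite hP hQ; congr (_ * _); congr mcoeff; apply/mnmP => i;
  by rewrite ?mnmBE !mnm_ofE !ffunE /= inordK ?bmnm_lt.
Qed.

Lemma represents_one : represents (@mpone R n) 1.
Proof. by move=> u; rewrite /mpone mcoeff1 -mdeg_mnm_of mdeg_eq0; case: eqP. Qed.

Lemma represents_pow P p k : represents P p -> represents (mppow P k) (p ^+ k).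
Proof.
move=> hP; elim: k => [|k IH]; first exact: represents_one.
by rewrite exprS; apply: represents_mul.
Qed.

Definition sum_pow (d : nat) : {mpoly R[n.+1]} := \sum_(i < n.+1) 'X_[U_(i) *+ d].

Lemma monX_eq d i u : (u == monX i d) = ((U_(i) *+ d)%MM == mnm_of u).
Proof.
apply/eqP/eqP => [->|hu].
  apply/mnmP => j; rewrite mulmnE mnm1E mnm_ofE ffunE eq_sym.
  by case: (_ == _); rewrite ?mul1n.
apply/ffunP => j; rewrite ffunE -mnm_ofE -hu mulmnE mnm1E eq_sym.
by case: (_ == _); rewrite ?mul1n.
Qed.

Lemma represents_Gpoly d : represents (@Gpoly R n d) (sum_pow d).
Proof.
move=> u; rewrite /Gpoly /sum_pow mcoeff_sum; apply: eq_bigr => i _.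
by rewrite mcoeffX monX_eq.
Qed.

Definition poly_of_homog (d : nat) (F : Defs.mpoly R n) : {mpoly R[n.+1]} :=
  \sum_(a : 'X_{1..n.+1 < d.+1}) F (mon_of a) *: 'X_[a].

Lemma represents_homog d F : Defs.homog F d -> represents F (poly_of_homog d F).
Proof.
move=> hF u; rewrite /poly_of_homog mcoeff_sum.
under eq_bigr do rewrite mcoeffZ mcoeffX.
have [small|large] := ltnP (mdeg (mnm_of u)) d.+1.
  rewrite (bigD1 (BMultinom small)) //= eqxx mulr1 mon_ofK big1 ?addr0 //.
  by move=> a; rewrite -val_eqE /= => /negbTE ->; rewrite mulr0.
rewrite hF ?big1 // => [a _|].
  rewrite (_ : (_ == _) = false) ?mulr0 //; apply/negbTE; apply: contraTneq large.
  by move=> <-; rewrite -ltnNge bmdeg.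
by rewrite -mdeg_mnm_of => hd; move: large; rewrite hd ltnn.
Qed.

Lemma mpmul_one P p : represents P p -> mpmul P (@mpone R n) =1 P.
Proof. by move=> hP u; rewrite (represents_mul hP represents_one) mulr1 hP. Qed.

Lemma mpone_mul P p : represents P p -> mpmul (@mpone R n) P =1 P.
Proof. by move=> hP u; rewrite (represents_mul represents_one hP) mul1r hP. Qed.

End Transfer.

Section Euler.
Variables (R : comNzRingType) (n : nat) (j : 'I_n.+1).

Lemma mcoeffMX_le (p : {mpoly R[n.+1]}) (a m : 'X_{1..n.+1}) :
  (p * 'X_[a])@_m = if (a <= m)%MM then p@_(m - a) else 0.
Proof.
case: ifP => [am|not_am]; first by rewrite -{1}(submK am) addmC mcoeffMX.
rewrite (mcoeff_poly_mul_lin _ _ (ltnSn _)) big1 // => k _; rewrite mcoeffX.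
case: eqP => [ek|]; last by rewrite mulr0.
by rewrite ek lem_subr in not_am.
Qed.

Definition euler (p : {mpoly R[n.+1]}) : {mpoly R[n.+1]} := 'X_j * p^`M(j).

Lemma mcoeff_euler p m : (euler p)@_m = p@_m * (m j)%:R.
Proof.
have Uj_le : (U_(j) <= m)%MM = (0 < m j)%N.
  apply/mnm_lepP/idP => [/(_ j)|mj_gt0 i]; first by rewrite mnm1E eqxx.
  by rewrite mnm1E; case: eqP => // <-.
rewrite /euler mulrC mcoeffMX_le Uj_le; case: posnP => [->|mj_gt0].
  by rewrite mulr0.
rewrite mcoeff_deriv mnmBE mnm1E eqxx subn1 prednK // mulr_natr submK //.
by rewrite Uj_le.
Qed.

Lemma euler_mul p q : euler (p * q) = euler p * q + p * euler q.
Proof. rewrite /euler mderivM; ring. Qed.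

Lemma euler_exp p k : euler (p ^+ k.+1) = k.+1%:R * p ^+ k * euler p.
Proof.
elim: k => [|k IH]; first by rewrite expr1 expr0 mulr1 mul1r.
rewrite exprS euler_mul IH -[k.+2]addn1 natrD exprS; ring.
Qed.

Lemma euler_sum_pow d : euler (sum_pow R n d) = d%:R * 'X_[U_(j) *+ d].
Proof.
apply/mpolyP => m; rewrite mcoeff_euler -mpolyC_nat mcoeffCM mcoeffX /sum_pow.
rewrite mcoeff_sum mulr_suml (bigD1 j) //= big1 ?addr0 => [|i ij].
  rewrite mcoeffX; case: eqP => [<-|]; rewrite ?mul0r ?mulr0 //.
  by rewrite mulmnE mnm1E eqxx mul1n mul1r mulr1.
rewrite mcoeffX; case: eqP => [<-|]; rewrite ?mul0r //.
by rewrite mulmnE mnm1E (negbTE ij) mul0n mulr0.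
Qed.

Lemma euler_identity (d m l : nat) (g f X : {mpoly R[n.+1]}) :
  euler g = d%:R * X ->
  (d * m.+1)%:R * (g ^+ m * f ^+ l.+1) * X =
  euler (g ^+ m.+1 * f ^+ l * f) - l.+1%:R * (g ^+ m.+1 * f ^+ l * euler f).
Proof.
move=> eg; rewrite -[g ^+ m.+1 * f ^+ l * f]mulrA -exprSr euler_mul !euler_exp eg.
rewrite natrM exprSr; ring.
Qed.

Lemma mcoeff_euler_combination (b l : nat) (p : {mpoly R[n.+1]})
    (c : 'X_{1..n.+1 < b} -> R) U :
  let f := \sum_a c a *: 'X_[val a] in
  (euler (p * f) - l%:R * (p * euler f))@_U =
  \sum_(a : 'X_{1..n.+1 < b}) ((U j)%:R - l%:R * (a j)%:R) * c a *
         (if (val a <= U)%MM then p@_(U - a) else 0).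
Proof.
move=> f; have mcoeffM_sum (e : 'X_{1..n.+1 < b} -> R) V :
    (p * \sum_a e a *: 'X_[val a])@_V =
    \sum_a e a * (if (val a <= V)%MM then p@_(V - a) else 0).
  by rewrite mulr_sumr mcoeff_sum; apply: eq_bigr => a _;
    rewrite -scalerAr mcoeffZ mcoeffMX_le.
have -> : euler f = \sum_(a : 'X_{1..n.+1 < b}) (c a * (a j)%:R) *: 'X_[val a].
  apply/mpolyP => m; rewrite mcoeff_euler !mcoeff_sum mulr_suml.
  by apply: eq_bigr => a _; rewrite !mcoeffZ mcoeffX; case: eqP => [<-|];
    rewrite ?mulr0 ?mul0r ?mulr1.
rewrite mcoeffB mcoeff_euler -mpolyC_nat mcoeffCM !mcoeffM_sum mulr_suml.
rewrite mulr_sumr -sumrB; apply: eq_bigr => a _; case: ifP => _; ring.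
Qed.

End Euler.

Section Pivot.
Variables (R : comNzRingType) (n d h : nat).

(* Since h > (d-1)(n+1), every t in B_h has a coordinate t_j >= d; the
   pivot of t is the first such j. *)
Definition pivot (t : Bset n h) : 'I_n.+1 := odflt ord0 [pick i | (d <= monB t i)%N].

Lemma pivot_large t : ((d - 1) * (n + 1) + 1 <= h)%N -> (d <= monB t (pivot t))%N.
Proof.
move=> hh; rewrite /pivot; case: pickP => [i //|small].
suff : (h <= \sum_(i < n.+1) (d - 1))%N by rewrite sum_nat_const card_ord; lia.
move: small; case: t => f /= hf small; rewrite -{1}(eqP hf); apply: leq_sum => i _.
by move: (small i); rewrite /monB ffunE /= => /negbT; rewrite -ltnNge; lia.
Qed.

Definition pivot_part (t : Bset n h) i : nat := if i == pivot t then d else 0%N.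

Lemma pivot_partE t i : (U_(pivot t) *+ d)%MM i = pivot_part t i.
Proof. by rewrite mulmnE mnm1E /pivot_part eq_sym; case: eqP; rewrite ?mul1n. Qed.

Lemma pivot_part_le t i : (d <= monB t (pivot t))%N -> (pivot_part t i <= monB t i)%N.
Proof. by rewrite /pivot_part; case: eqP => [->|]. Qed.

(* t - d e_j + a: the index reached from t through the monomial x^a of F. *)
Definition shift (t : Bset n h) (a : 'X_{1..n.+1}) : mon n :=
  [ffun i => (monB t i - pivot_part t i + a i)%N].

Lemma mdeg_shift t (a : 'X_{1..n.+1}) : (d <= monB t (pivot t))%N ->
  (Defs.mdeg (shift t a) + d = h + mdeg a)%N.
Proof.
move=> hj; rewrite /Defs.mdeg mdegE.
have sum_t : (\sum_i monB t i = h)%N.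
  by apply: (etrans _ (eqP (valP t))); apply/eq_bigr => i _; rewrite ffunE.
have sum_part : (\sum_i pivot_part t i = d)%N.
  rewrite (bigD1 (pivot t)) //= big1 ?addn0 => [|i /negbTE ni].
    by rewrite /pivot_part eqxx.
  by rewrite /pivot_part ni.
have d_le_h : (d <= h)%N by rewrite -sum_t (leq_trans hj) // (bigD1 (pivot t)) //= leq_addr.
under eq_bigr do rewrite ffunE.
rewrite big_split /= sumnB => [|i _]; last exact: pivot_part_le.
by rewrite sum_t sum_part; lia.
Qed.

Lemma sum_Bset_indicator (x : mon n) (g : mon n -> R) :
  \sum_(s : Bset n h) (monB s == x)%:R * g (monB s) = (Defs.mdeg x == h)%:R * g x.
Proof.
have [hx|hx] := boolP (Defs.mdeg x == h); last first.
  rewrite big1 ?mul0r // => s _; case: eqP => [ex|]; last by rewrite mul0r.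
  move/negP: hx; case; rewrite -ex /Defs.mdeg.
  by apply/eqP; apply: (etrans _ (eqP (valP s))); apply/eq_bigr => i _; rewrite ffunE.
have x_lt i : (x i < h.+1)%N.
  by rewrite ltnS -(eqP hx) /Defs.mdeg (bigD1 i) //= leq_addr.
pose f0 : {ffun 'I_n.+1 -> 'I_h.+1} := [ffun i => inord (x i)].
have f0_sum : (\sum_i nat_of_ord (f0 i) == h)%N.
  by apply/eqP; apply: (etrans _ (eqP hx)); apply/eq_bigr => i _; rewrite ffunE inordK.
pose s0 : Bset n h := exist _ f0 f0_sum.
have s0E : monB s0 = x by apply/ffunP => i; rewrite /monB !ffunE /= inordK.
rewrite (bigD1 s0) //= s0E eqxx mul1r big1 ?addr0 // => s ns.
case: eqP => [ex|]; last by rewrite mul0r.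
case/eqP: ns; apply/val_inj/ffunP => i; apply/val_inj.
by move/ffunP: ex => /(_ i); rewrite -s0E /monB !ffunE.
Qed.

End Pivot.

Section Recurrence.
Variables (R : comNzRingType) (n d h : nat) (F : Defs.mpoly R n) (v w : mon n).
Hypothesis homF : Defs.homog F d.

Definition weight (k l : nat) (t : Bset n h) (a : 'X_{1..n.+1}) : R :=
  let j := pivot d t in
  ((w j + d)%:R - (monB t j)%:R - (a j)%:R + k%:R * (v j)%:R - l%:R * (a j)%:R)
  * F (mon_of a).

Definition hits (t s : Bset n h) (a : 'X_{1..n.+1}) : R := (monB s == shift d t a)%:R.

Definition QA (t s : Bset n h) : R := \sum_(a : 'X_{1..n.+1 < d.+1})
  hits t s a * (((w (pivot d t) + d)%:R - (monB t (pivot d t))%:R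
                 - (a (pivot d t))%:R) * F (mon_of a)).
Definition QB (t s : Bset n h) : R := \sum_(a : 'X_{1..n.+1 < d.+1})
  hits t s a * ((v (pivot d t))%:R * F (mon_of a)).
Definition QC (t s : Bset n h) : R := \sum_(a : 'X_{1..n.+1 < d.+1})
  hits t s a * (- ((a (pivot d t))%:R * F (mon_of a))).

Lemma Qeval_weight k l t s : Qeval QA QB QC k l t s =
  \sum_(a : 'X_{1..n.+1 < d.+1}) hits t s a * weight k l t a.
Proof.
rewrite /Qeval /QA /QB /QC !mulr_sumr -!big_split /=; apply: eq_bigr => a _.
rewrite /weight; ring.
Qed.

Lemma mxv_Qeval k l (P : Defs.mpoly R n) t : (d <= monB t (pivot d t))%N ->
  mxv (Qeval QA QB QC k l) (bvec P k v w) t =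
  \sum_(a : 'X_{1..n.+1 < d.+1}) weight k l t a * coefkvwt P k v w (shift d t a).
Proof.
move=> hj; rewrite /mxv.
under eq_bigr do rewrite Qeval_weight mulr_suml.
rewrite exchange_big /=; apply: eq_bigr => a _.
under eq_bigr do rewrite /hits mulrAC.
rewrite -mulr_suml (sum_Bset_indicator h (shift d t a) (coefkvwt P k v w)).
have [ha|ha] := eqVneq (mdeg a) d.
  have -> : Defs.mdeg (shift d t a) == h.
    by apply/eqP; move: (mdeg_shift a hj); rewrite ha; lia.
  by rewrite mul1r mulrC.
rewrite /weight homF ?mulr0 ?mul0r // /Defs.mdeg => e; move/eqP: ha; apply.
by rewrite mdegE; apply: (etrans _ e); apply/eq_bigr => i _; rewrite ffunE.
Qed.

(* The exponent k v + w + d e_j - t at which the coefficients are read off. *)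
Definition window (k : nat) (t : Bset n h) : 'X_{1..n.+1} :=
  mnm_of [ffun i => (k * v i + w i + pivot_part d t i - monB t i)%N].

Definition in_window (k : nat) (t : Bset n h) : bool :=
  [forall i, monB t i <= k * v i + w i + pivot_part d t i]%N.

Lemma windowE k (t : Bset n h) i :
  window k t i = (k * v i + w i + pivot_part d t i - monB t i)%N.
Proof. by rewrite mnm_ofE ffunE. Qed.

Lemma coefkvwt_pivot (P : Defs.mpoly R n) p k t :
  represents P p -> (d <= monB t (pivot d t))%N -> in_window k t ->
  coefkvwt P k v w (monB t) = (p * 'X_[U_(pivot d t) *+ d])@_(window k t).
Proof.
move=> hP hj /forallP win; rewrite mcoeffMX_le /coefkvwt.
have -> : [forall i, monB t i <= k * v i + w i]%N = (U_(pivot d t) *+ d <= window k t)%MM.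
  apply/forallP/mnm_lepP => H i; move: (H i) (win i) (pivot_part_le i hj);
  by rewrite pivot_partE windowE; lia.
case: ifP => // _; rewrite hP; congr mcoeff; apply/mnmP => i.
by rewrite mnmBE mnm_ofE ffunE windowE pivot_partE; move: (win i); lia.
Qed.

Lemma coefkvwt_shift (P : Defs.mpoly R n) p k t (a : 'X_{1..n.+1}) :
  represents P p -> (d <= monB t (pivot d t))%N -> in_window k t ->
  coefkvwt P k v w (shift d t a) =
  if (a <= window k t)%MM then p@_(window k t - a) else 0.
Proof.
move=> hP hj /forallP win; rewrite /coefkvwt.
have -> : [forall i, shift d t a i <= k * v i + w i]%N = (a <= window k t)%MM.
  apply/forallP/mnm_lepP => H i; move: (H i) (win i) (pivot_part_le i hj);
  by rewrite windowE /shift !ffunE; lia.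
case: ifP => // _; rewrite hP; congr mcoeff; apply/mnmP => i.
by move: (win i) (pivot_part_le i hj); rewrite mnmBE mnm_ofE windowE /shift !ffunE; lia.
Qed.

Lemma coefkvwt_out_of_window (P : Defs.mpoly R n) k t (a : 'X_{1..n.+1}) :
  (d <= monB t (pivot d t))%N -> ~~ in_window k t ->
  coefkvwt P k v w (monB t) = 0 /\ coefkvwt P k v w (shift d t a) = 0.
Proof.
move=> hj /forallPn [i out]; rewrite /coefkvwt !ifF //; apply/negbTE/forallPn;
  by exists i; move: out (pivot_part_le i hj); rewrite ?/shift ?ffunE; lia.
Qed.

(* Inside the window the weight is (window_j - (l+1) a_j) F_a, the factor
   produced by E_j(P F) - (l+1) P E_j F. *)
Lemma weight_window k l t (a : 'X_{1..n.+1}) :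
  (d <= monB t (pivot d t))%N -> in_window k t ->
  weight k l t a =
  ((window k t (pivot d t))%:R - l.+1%:R * (a (pivot d t))%:R) * F (mon_of a).
Proof.
move=> hj /forallP /(_ (pivot d t)); rewrite windowE /pivot_part eqxx => win.
by rewrite /weight natrB // !natrD natrM; ring.
Qed.

Lemma coefficient_recurrence k l M (P P' : Defs.mpoly R n) p p' t :
  (d <= monB t (pivot d t))%N -> represents P p -> represents P' p' ->
  M%:R * p' * 'X_[U_(pivot d t) *+ d] =
    euler (pivot d t) (p * poly_of_homog d F)
    - l.+1%:R * (p * euler (pivot d t) (poly_of_homog d F)) ->
  M%:R * coefkvwt P' k v w (monB t) =
  \sum_(a : 'X_{1..n.+1 < d.+1}) weight k l t a * coefkvwt P k v w (shift d t a).
Proof.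
move=> hj hP hP' identity; have [win|out] := boolP (in_window k t); last first.
  rewrite (proj1 (coefkvwt_out_of_window P' 0 hj out)) mulr0 big1 // => a _.
  by rewrite (proj2 (coefkvwt_out_of_window P a hj out)) mulr0.
rewrite (coefkvwt_pivot hP' hj win) -mcoeffCM mpolyC_nat mulrA identity.
rewrite mcoeff_euler_combination; apply: eq_bigr => a _.
by rewrite (coefkvwt_shift _ hP hj win) (weight_window _ _ hj win).
Qed.

Lemma recurrence (k l m : nat) t : ((d - 1) * (n + 1) + 1 <= h)%N ->
  ((d * m.+1)%N)%:R * bvec (mpmul (mppow (@Gpoly R n d) m) (mppow F l.+1)) k v w t
  = mxv (Qeval QA QB QC k l)
        (bvec (mpmul (mppow (@Gpoly R n d) m.+1) (mppow F l)) k v w) t.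
Proof.
move=> hh; have hj := pivot_large t hh.
have repG j := represents_pow j (@represents_Gpoly R n d).
have repF j := represents_pow j (represents_homog homF).
rewrite mxv_Qeval //; apply: coefficient_recurrence => //.
- exact: represents_mul (repG _) (repF _).
- exact: represents_mul (repG _) (repF _).
- by apply: euler_identity; apply: euler_sum_pow.
Qed.

End Recurrence.

Section Telescoping.
Variables (R : idomainType) (n h : nat).

Lemma chain_telescope (Q : nat -> Bset n h -> Bset n h -> R)
    (Q' : nat -> Bset n h -> Bset n h -> {fraction R}) (X : nat -> Bset n h -> R)
    (x0 : Bset n h -> {fraction R}) (c : nat -> R) (N : nat) :
  (forall l a b, Q' l a b = toF (Q l a b)) -> (forall u, x0 u = toF (X 0%N u)) ->
  (forall l, (l < N)%N -> forall t, c l * X l.+1 t = mxv (Q l) (X l) t) ->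
  forall j, (j <= N)%N -> forall t,
    chain Q' x0 j t = toF (\prod_(l < j) c l) * toF (X j t).
Proof.
move=> hQ hx hrec; elim => [|j IH] hj t /=.
  by rewrite big_ord0 /toF rmorph1 mul1r hx.
transitivity (toF (\prod_(l < j) c l) * toF (mxv (Q j) (X j) t)).
  rewrite /mxv /toF rmorph_sum mulr_sumr; apply: eq_bigr => s _.
  by rewrite IH ?(ltnW hj) // hQ /toF rmorphM mulrCA.
by rewrite -hrec // big_ord_recr /= /toF !rmorphM mulrA.
Qed.

Lemma chain_solve (Q : nat -> Bset n h -> Bset n h -> R)
    (Q' : nat -> Bset n h -> Bset n h -> {fraction R}) (X : nat -> Bset n h -> R)
    (x0 : Bset n h -> {fraction R}) (c : nat -> R) (N : nat) :
  (forall l a b, Q' l a b = toF (Q l a b)) -> (forall u, x0 u = toF (X 0%N u)) ->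
  (forall l, (l < N)%N -> forall t, c l * X l.+1 t = mxv (Q l) (X l) t) ->
  \prod_(l < N) c l != 0 ->
  forall t, (toF (\prod_(l < N) c l))^-1 * chain Q' x0 N t = toF (X N t).
Proof.
move=> hQ hx hrec nz t; rewrite (chain_telescope hQ hx hrec (leqnn N)).
by rewrite mulKf // /toF tofrac_eq0.
Qed.

End Telescoping.

Lemma prod_falling (R : nzSemiRingType) (d N : nat) :
  \prod_(l < N) ((d * (N - l))%N)%:R = ((d ^ N * N`!)%N)%:R :> R.
Proof.
rewrite -natr_prod big_split /= prod_nat_const card_ord; congr ((_ * _)%N)%:R.
rewrite (reindex_inj rev_ord_inj) /=; under eq_bigr do rewrite subKn ?ltn_ord //.
by rewrite fact_prod big_add1 big_mkord.
Qed.

Lemma toF_Qeval (R : idomainType) n h (A B C : Bset n h -> Bset n h -> R) k l t s :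
  Qeval (fun a b => toF (A a b)) (fun a b => toF (B a b)) (fun a b => toF (C a b)) k l t s
  = toF (Qeval A B C k l t s).
Proof. by rewrite /Qeval /toF !rmorphD !rmorphM !rmorph_nat. Qed.

Lemma closed_form (R : idomainType) (n d h : nat) (F : Defs.mpoly R n) (v w : mon n) :
  [pchar R] =i pred0 -> (0 < d)%N -> Defs.homog F d ->
  ((d - 1) * (n + 1) + 1 <= h)%N ->
  forall (k N : nat) (t : Bset n h),
  toF (bvec (mppow F N) k v w t) =
  (((d ^ N * N`!)%N)%:R : {fraction R})^-1 *
  chain (fun l => Qeval (fun a b => toF (QA d F w a b)) (fun a b => toF (QB d F v a b))
                        (fun a b => toF (QC d F a b)) k l)
        (fun u => toF (bvec (mppow (@Gpoly R n d) N) k v w u)) N t.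
Proof.
move=> charR0 d_gt0 homF hh k N t.
have repG := represents_pow N (@represents_Gpoly R n d).
have repF := represents_pow N (represents_homog homF).
pose X l : Bset n h -> R := bvec (mpmul (mppow (@Gpoly R n d) (N - l)) (mppow F l)) k v w.
have nz : \prod_(l < N) ((d * (N - l))%N)%:R != 0 :> R.
  by rewrite prod_falling ((pcharf0P _).1 charR0) -lt0n muln_gt0 expn_gt0 d_gt0 fact_gt0.
have -> : bvec (mppow F N) k v w t = X N t.
  by rewrite /X /bvec /coefkvwt subnn /= (mpone_mul repF).
have -> : ((d ^ N * N`!)%N)%:R = toF (\prod_(l < N) ((d * (N - l))%N)%:R :> R).
  by rewrite prod_falling /toF rmorph_nat.
rewrite (chain_solve (Q := fun l => Qeval (QA d F w) (QB d F v) (QC d F) k l) (X := X)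
  (c := fun l => ((d * (N - l))%N)%:R) (fun l => toF_Qeval _ _ _ k l) _ _ nz) //.
- by move=> u; rewrite /X /bvec /coefkvwt subn0 /= (mpmul_one repG).
- move=> l l_lt u; rewrite /X; have -> : (N - l = (N - l.+1).+1)%N by lia.
  exact: recurrence.
Qed.

End EulerRecurrence.

Import EulerRecurrence.
Unset Implicit Arguments.
Theorem theorem4p1 (R : idomainType) (charR0 : [pchar R] =i pred0)
  (n d : nat) (hn : (1 <= n)%N) (hd : (1 <= d)%N)
  (F : mpoly R n) (hF : homog F d)
  (s h : nat) (hs : (1 <= s)%N) (hh : ((d - 1) * (n + 1) + 1 <= h)%N)
  (v w : mon n) (hv : mdeg v = (d * s)%N) (hw : mdeg w = h) :
  exists A B C : Bset n h -> Bset n h -> R,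
    (forall k0 l0 : nat, (1 <= k0)%N -> (l0 < k0 * s)%N ->
       forall t : Bset n h,
         ((d * (k0 * s - l0))%N)%:R *
           bvec (mpmul (mppow (@Gpoly R n d) (k0 * s - l0 - 1)) (mppow F l0.+1)) k0 v w t
         = mxv (Qeval A B C k0 l0)
             (bvec (mpmul (mppow (@Gpoly R n d) (k0 * s - l0)) (mppow F l0)) k0 v w) t)
    /\
    (forall k0 : nat, (1 <= k0)%N ->
       forall t : Bset n h,
         toF (bvec (mppow F (k0 * s)) k0 v w t)
         = (((d ^ (k0 * s) * (k0 * s)`!)%N)%:R : {fraction R})^-1 *
           chain (fun l => Qeval (fun a b => toF (A a b)) (fun a b => toF (B a b))
                                 (fun a b => toF (C a b)) k0 l)
                 (fun u => toF (bvec (mppow (@Gpoly R n d) (k0 * s)) k0 v w u))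
                 (k0 * s) t).
Proof.
exists (@QA R n d h F w), (@QB R n d h F v), (@QC R n d h F).
split=> [k l _ l_lt t|k _ t]; last exact: closed_form charR0 hd hF hh k (k * s) t.
set m := (k * s - l - 1)%N; have -> : (k * s - l = m.+1)%N by rewrite /m; lia.
exact: recurrence hF k l m t hh.
Qed.
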